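(* Let $(X,S)$ be an $S$-metric space, $r\ge0$, $\{x_n\}$ a sequence in $X$, and $\{x_{n_p}\}_{p\in\mathbb N}$ a subsequence (with $n_1<n_2<\cdots$) such that $\delta(\{n_1,n_2,\dots\})=1$. Then $st\text{-}LIM^r x_n\subseteq st\text{-}LIM^r x_{n_p}$.
   Context: An $S$-metric on a nonempty set $X$ is a function $S:X^3\to[0,\infty)$ such that for all $x,y,z,a\in X$: $S(x,y,z)=0$ if and only if $x=y=z$, and $S(x,y,z)\le S(x,x,a)+S(y,y,a)+S(z,z,a)$. For $B\subset\mathbb N$ the natural density is $\delta(B)=\lim_{n\to\infty}\frac{|\{k\in B:k\le n\}|}{n}$ when the limit exists. For $r\ge0$, a sequence $\{y_n\}$ is $r$-statistically convergent to $x$ if for every $\varepsilon>0$, $\delta(\{n\in\mathbb N: S(y_n,y_n,x)\ge r+\varepsilon\})=0$; $st\text{-}LIM^r y_n$ denotes the set of all such $x\in X$. *)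

From Stdlib Require Import Reals Lra ClassicalDescription.
Open Scope R_scope.

Definition is_Smetric {X : Type} (S : X -> X -> X -> R) : Prop :=
  (forall x y z, 0 <= S x y z) /\
  (forall x y z, S x y z = 0 <-> (x = y /\ y = z)) /\
  (forall x y z a, S x y z <= S x x a + S y y a + S z z a).

Fixpoint count_upto (P : nat -> Prop) (n : nat) : nat :=
  match n with
  | O => O
  | S m => (count_upto P m +
            (if excluded_middle_informative (P m) then 1 else 0))%nat
  end.

Definition has_density (P : nat -> Prop) (d : R) : Prop :=
  Un_cv (fun n => INR (count_upto P n) / INR n) d.

(* y is r-statistically convergent to x, i.e. x ∈ st-LIM^r y *)
Definition st_LIM {X : Type} (S : X -> X -> X -> R) (r : R) (y : nat -> X) (x : X) : Prop :=
  forall eps : R, 0 < eps -> has_density (fun n => r + eps <= S (y n) (y n) x) 0.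

(** The first [m] terms of the subsequence are among the first [ns m] terms
    of [x], and exactly [m] of these first [ns m] indices lie in the range of
    [ns].  Hence the proportion of bad terms among the first [m] terms of the
    subsequence is at most [#bad(ns m) / #range(ns m)], the ratio of two
    densities along [ns m], which tends to [0 / 1 = 0].  Neither the S-metric
    axioms nor [0 <= r] play a role: the inclusion holds for any predicate of
    density zero. *)

From Stdlib Require Import Reals Lra Lia ClassicalDescription.
From Coquelicot Require Import Coquelicot.
Open Scope R_scope.

Lemma count_upto_True n : count_upto (fun _ => True) n = n.
Proof.
  induction n as [|n IH]; simpl; [reflexivity|].
  destruct (excluded_middle_informative True) as [_|[]]; lia.
Qed.

Lemma count_upto_le_mono P n k :
  (n <= k)%nat -> (count_upto P n <= count_upto P k)%nat.
Proof.
  induction 1 as [|k _ IH]; [lia|]. simpl.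
  destruct (excluded_middle_informative (P k)); lia.
Qed.

Lemma count_upto_add_none P k n :
  (forall j, (k <= j < k + n)%nat -> ~ P j) ->
  count_upto P (k + n) = count_upto P k.
Proof.
  induction n as [|n IH]; intros HnP; [now rewrite Nat.add_0_r|].
  rewrite Nat.add_succ_r. simpl.
  destruct (excluded_middle_informative (P (k + n)%nat)) as [HP|_].
  - exfalso. apply (HnP (k + n)%nat); [lia | exact HP].
  - rewrite IH; [lia|]. intros j Hj. apply HnP. lia.
Qed.

Section StrictlyIncreasing.

Variable ns : nat -> nat.
Hypothesis ns_lt : forall p q : nat, (p < q)%nat -> (ns p < ns q)%nat.

Lemma ns_le p q : (p <= q)%nat -> (ns p <= ns q)%nat.
Proof.
  intros Hpq. destruct (Nat.eq_dec p q) as [<-|Hne]; [lia|].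
  apply Nat.lt_le_incl, ns_lt. lia.
Qed.

Lemma ns_ge_id p : (p <= ns p)%nat.
Proof. induction p as [|p IH]; [lia|]. specialize (ns_lt p (S p)). lia. Qed.

Lemma count_upto_comp_le (P Q : nat -> Prop) :
  (forall p, P p -> Q (ns p)) ->
  forall m, (count_upto P m <= count_upto Q (ns m))%nat.
Proof.
  intros HPQ m. induction m as [|m IH]; simpl; [lia|].
  pose proof (count_upto_le_mono Q _ _ (ns_lt m (S m) (Nat.lt_succ_diag_r m)))
    as Hmono; simpl in Hmono.
  destruct (excluded_middle_informative (P m)) as [HP|_];
  destruct (excluded_middle_informative (Q (ns m))) as [HQ|HQ]; try lia.
  exfalso. exact (HQ (HPQ m HP)).
Qed.

Let in_range k := exists p, k = ns p.

Lemma count_upto_range_le m : (count_upto in_range (ns m) <= m)%nat.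
Proof.
  induction m as [|m IH].
  - replace (ns 0) with (0 + ns 0)%nat by lia.
    rewrite count_upto_add_none; [simpl; lia|].
    intros j Hj [p ->]. pose proof (ns_le 0 p). lia.
  - pose proof (ns_lt m (S m)) as Hstep.
    replace (ns (S m)) with (S (ns m) + (ns (S m) - S (ns m)))%nat by lia.
    rewrite count_upto_add_none; simpl.
    + destruct excluded_middle_informative; lia.
    + intros j Hj [p ->].
      destruct (Nat.le_gt_cases p m) as [Hp|Hp].
      * pose proof (ns_le p m Hp). lia.
      * pose proof (ns_le (S m) p Hp). lia.
Qed.

Lemma count_upto_range m : count_upto in_range (ns m) = m.
Proof.
  apply Nat.le_antisymm; [apply count_upto_range_le|].
  rewrite <- (count_upto_True m) at 1.
  apply count_upto_comp_le. intros p _. now exists p.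
Qed.

Lemma has_density0_comp (P : nat -> Prop) (d : R) :
  0 < d -> has_density in_range d -> has_density P 0 ->
  has_density (fun p => P (ns p)) 0.
Proof.
  unfold has_density. intros Hd Hrange HP.
  apply is_lim_seq_Reals in Hrange, HP. apply is_lim_seq_Reals.
  set (dens Q n := INR (count_upto Q n) / INR n).
  assert (Hratio : is_lim_seq
            (fun m => dens P (ns m) / dens in_range (ns m)) 0).
  { replace 0 with (0 / d) by (unfold Rdiv; ring).
    apply is_lim_seq_div'; try lra;
      apply is_lim_seq_subseq; auto;
      apply eventually_subseq; intros n; apply ns_lt; lia. }
  apply (is_lim_seq_le_le_loc (fun _ => 0) (dens (fun p => P (ns p)))
           (fun m => dens P (ns m) / dens in_range (ns m)) 0);
    [|apply is_lim_seq_const|exact Hratio].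
  exists 1%nat. intros m Hm.
  assert (Hm1 : 1 <= INR m) by (apply (le_INR 1); exact Hm).
  assert (Hnsm : INR m <= INR (ns m)) by (apply le_INR, ns_ge_id).
  assert (Hcomp : INR (count_upto (fun p => P (ns p)) m)
                  <= INR (count_upto P (ns m)))
    by (apply le_INR, count_upto_comp_le; auto).
  pose proof (pos_INR (count_upto (fun p => P (ns p)) m)).
  assert (Hcancel : dens P (ns m) / dens in_range (ns m)
                    = INR (count_upto P (ns m)) / INR m).
  { unfold dens. rewrite count_upto_range. field. lra. }
  rewrite Hcancel. split.
  - apply Rdiv_le_0_compat; lra.
  - apply Rmult_le_compat_r; [|exact Hcomp].
    left. apply Rinv_0_lt_compat. lra.
Qed.

End StrictlyIncreasing.

Theorem theorem4p7 (X : Type) (S : X -> X -> X -> R) (hS : is_Smetric S)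
  (r : R) (hr : 0 <= r) (x : nat -> X) (ns : nat -> nat)
  (hinc : forall p q : nat, (p < q)%nat -> (ns p < ns q)%nat)
  (hdens : has_density (fun k => exists p : nat, k = ns p) 1) :
  forall a : X, st_LIM S r x a -> st_LIM S r (fun p => x (ns p)) a.
Proof.
  intros a Ha eps Heps.
  apply (has_density0_comp ns hinc (fun n => r + eps <= S (x n) (x n) a) 1);
    [lra | exact hdens | exact (Ha eps Heps)].
Qed.
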